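(* Let $G$ be an $n\times n$ Game of Primes grid (defined in the context) and suppose some cell of $G$ has at least four neighbors containing prime numbers. Then the cycle length of $G$ is even.
   Context: A Game of Primes (GOPM) grid of dimension $n$ is an $n\times n$ grid whose cells are filled with the $n^2$ natural numbers $a, a+d, a+2d,\dots,a+(n^2-1)d$ (for fixed integers $a\ge 1$, $d\ge 1$) in snake-like (boustrophedon) order: the first row is filled left to right starting with $a$ in the top-left cell, the second row right to left, the third row left to right, and so on. Two distinct cells are neighbors if they are adjacent horizontally, vertically or diagonally. Each cell is in one of two states, excited or dormant; a configuration (''day'') assigns a state to every cell. For a configuration $s$ and a cell $c$, let $N_s(c)$ be the number of neighbors of $c$ that contain a prime number or are excited in $s$ (or both). The update map $F$ sends $s$ to $F(s)$ where: a cell dormant in $s$ becomes excited iff $N_s(c)\ge 3$ (otherwise stays dormant); a cell excited in $s$ becomes dormant iff $N_s(c)\ge 4$ or $N_s(c)=0$ (otherwise stays excited). Day $0$, $s_0$, has all cells dormant, and $s_{t+1}=F(s_t)$. Since there are finitely many configurations, the sequence $(s_t)$ is eventually periodic; the cycle length of $G$ is the least $p\ge 1$ such that $s_{t+p}=s_t$ for all sufficiently large $t$. *)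

From mathcomp Require Import all_boot.
Set Implicit Arguments. Unset Strict Implicit. Unset Printing Implicit Defensive.

(* Cells of an n x n grid: (row, column), rows numbered top to bottom,
   columns left to right, both 0-based. *)
Definition cell (n : nat) := ('I_n * 'I_n)%type.

(* Position (0-based) of a cell in the snake-like (boustrophedon) order:
   even rows (1st, 3rd, ...) left to right, odd rows right to left. *)
Definition snake_index (n : nat) (c : cell n) : nat :=
  let i := nat_of_ord c.1 in let j := nat_of_ord c.2 in
  if odd i then i * n + (n - 1 - j) else i * n + j.

Definition gval (n a d : nat) (c : cell n) : nat := a + snake_index c * d.

Definition dist1 (x y : nat) : bool := (x <= y.+1) && (y <= x.+1).
Definition neighbor (n : nat) (c c' : cell n) : bool :=
  (c != c') && dist1 c.1 c'.1 && dist1 c.2 c'.2.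

(* A configuration (day): true = excited, false = dormant. *)
Definition config (n : nat) := {ffun cell n -> bool}.

Definition Ncount (n a d : nat) (s : config n) (c : cell n) : nat :=
  #|[set c' : cell n | neighbor c c' && (prime (gval a d c') || s c')]|.

Definition step (n a d : nat) (s : config n) : config n :=
  [ffun c => let k := Ncount a d s c in
             if s c then ~~ ((4 <= k) || (k == 0)) else 3 <= k].

Definition day (n a d t : nat) : config n :=
  iter t (step a d) [ffun _ => false].

Definition eventual_period (n a d p : nat) : Prop :=
  exists T, forall t, T <= t -> day n a d (t + p) = day n a d t.

Definition is_cycle_length (n a d p : nat) : Prop :=
  0 < p /\ eventual_period n a d p /\
  forall q, 0 < q -> eventual_period n a d q -> p <= q.

From mathcomp Require Import all_boot.
Set Implicit Arguments. Unset Strict Implicit. Unset Printing Implicit Defensive.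

(* A cell with at least four prime neighbours always sees at least four
   "active" neighbours, so the update rule toggles it every day: it is excited
   exactly on the odd days.  Its state therefore has period 2 and can only
   repeat after an even number of days. *)

Lemma prime_neighbors_le_Ncount (n a d : nat) (s : config n) (c : cell n) :
  #|[set c' : cell n | neighbor c c' && prime (gval a d c')]| <= Ncount a d s c.
Proof.
apply: subset_leq_card; apply/subsetP => c'.
by rewrite !inE => /andP[-> ->].
Qed.

Lemma step_toggle (n a d : nat) (s : config n) (c : cell n) :
  4 <= Ncount a d s c -> step a d s c = ~~ s c.
Proof.
move=> N_ge4; rewrite /step ffunE N_ge4.
by case: (s c) => //=; apply: leq_trans N_ge4.
Qed.

Lemma day_toggle_cell (n a d : nat) (c : cell n) :
  4 <= #|[set c' : cell n | neighbor c c' && prime (gval a d c')]| ->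
  forall t, day n a d t c = odd t.
Proof.
move=> primes_ge4; elim=> [|t IHt]; first by rewrite /day /= ffunE.
rewrite /day iterS -/(day n a d t) step_toggle ?IHt //.
apply: leq_trans primes_ge4 _; exact: prime_neighbors_le_Ncount.
Qed.

Theorem theorem4p2 (n a d : nat) (ha : 1 <= a) (hd : 1 <= d) :
  (exists c : cell n,
      4 <= #|[set c' : cell n | neighbor c c' && prime (gval a d c')]|) ->
  forall p : nat, is_cycle_length n a d p -> ~~ odd p.
Proof.
move=> [c primes_ge4] p [_ [[T periodic] _]].
have := congr1 (fun s : config n => s c) (periodic T (leqnn T)).
by rewrite /= !(day_toggle_cell primes_ge4) oddD; case: (odd T); case: (odd p).
Qed.
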